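(* Let $\mathcal{V}$ be a (left) skew-monoidal category, $\mathcal{A}$ a category, and $\ast\colon\mathcal{V}\times\mathcal{A}\to\mathcal{A}$ and $\underline{\mathcal{A}}(-,-)\colon\mathcal{A}^{\mathrm{op}}\times\mathcal{A}\to\mathcal{V}$ functors. Given an isomorphism $\mathcal{A}(X\ast A,B)\cong\mathcal{V}(X,\underline{\mathcal{A}}(A,B))$ natural in $X,A,B$, there is a bijection between skew $\mathcal{V}$-actegory structures extending $(\mathcal{A},\ast)$ and skew $\mathcal{V}$-category structures extending $(\mathcal{A},\underline{\mathcal{A}}(-,-))$. Moreover, if $\mathcal{V}$ is monoidal closed, then there is a bijection between $\mathcal{V}$-actegory structures extending $(\mathcal{A},\ast)$ and tensored $\mathcal{V}$-category structures extending $(\mathcal{A},\underline{\mathcal{A}}(-,-))$.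
   Context: A (left) skew-monoidal category $(\mathcal{V},\otimes,I,a,l,r)$ is a category with a functor $\otimes$, an object $I$, and natural transformations (not necessarily invertible) $a\colon (X\otimes Y)\otimes Z\to X\otimes(Y\otimes Z)$, $l\colon I\otimes X\to X$, $r\colon X\to X\otimes I$, satisfying: $(1\otimes a)\circ a\circ(a\otimes 1)=a\circ a$; $l_{X\otimes Y}\circ a_{I,X,Y}=l_X\otimes 1_Y$; $(1_X\otimes l_Y)\circ a_{X,I,Y}\circ(r_X\otimes 1_Y)=1$; $a_{X,Y,I}\circ r_{X\otimes Y}=1_X\otimes r_Y$; $l_I\circ r_I=1_I$. It is monoidal closed if $a,l,r$ are invertible and each $-\otimes Y$ has a right adjoint $[Y,-]$. A skew $\mathcal{V}$-actegory structure extending $(\mathcal{A},\ast)$ consists of natural transformations (not necessarily invertible) $a\colon(X\otimes Y)\ast A\to X\ast(Y\ast A)$, $l\colon I\ast A\to A$ such that $(1_X\ast a_{Y,Z,A})\circ a_{X,Y\otimes Z,A}\circ(a_{X,Y,Z}\ast1_A)=a_{X,Y,Z\ast A}\circ a_{X\otimes Y,Z,A}$, $l_{X\ast A}\circ a_{I,X,A}=l_X\ast1_A$, and $(1_X\ast l_A)\circ a_{X,I,A}\circ(r_X\ast1_A)=1_{X\ast A}$. It is a $\mathcal{V}$-actegory structure if $a$ and $l$ are invertible. A skew $\mathcal{V}$-category structure extending $(\mathcal{A},\underline{\mathcal{A}}(-,-))$ consists of natural transformations $M\colon\underline{\mathcal{A}}(B,C)\otimes\underline{\mathcal{A}}(A,B)\to\underline{\mathcal{A}}(A,C)$,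 $j\colon I\to\underline{\mathcal{A}}(A,A)$ (natural with respect to morphisms of $\mathcal{A}$) with $M\circ(1\otimes M)\circ a=M\circ(M\otimes 1)$, $M\circ(j\otimes 1)=l$, $M\circ(1\otimes j)\circ r=1$. It is normal if each function $\mathcal{A}(A,B)\to\mathcal{V}(I,\underline{\mathcal{A}}(A,B))$, $f\mapsto\underline{\mathcal{A}}(A,f)\circ j_A$, is a bijection (so that it amounts to an ordinary $\mathcal{V}$-category with underlying category $\mathcal{A}$). For $\mathcal{V}$ monoidal closed, a tensored $\mathcal{V}$-category structure extending $(\mathcal{A},\underline{\mathcal{A}}(-,-))$ is a normal such structure for which, writing $\eta_{Y,A}\colon Y\to\underline{\mathcal{A}}(A,Y\ast A)$ for the morphism corresponding to $1_{Y\ast A}$ under the given isomorphism, each morphism $k\colon\underline{\mathcal{A}}(Y\ast A,C)\to[Y,\underline{\mathcal{A}}(A,C)]$ adjunct to $M\circ(1\otimes\eta_{Y,A})\colon\underline{\mathcal{A}}(Y\ast A,C)\otimes Y\to\underline{\mathcal{A}}(A,C)$ is invertible. *)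

(* Each structure is split into data + (Prop) laws so that the laws can be
   written with implicit arguments. *)

Record Cat := {
  ob :> Type;
  hom : ob -> ob -> Type;
  idm : forall A, hom A A;
  comp : forall A B C, hom B C -> hom A B -> hom A C;
  comp_id_l : forall A B (f : hom A B), comp A B B (idm B) f = f;
  comp_id_r : forall A B (f : hom A B), comp A A B f (idm A) = f;
  comp_assoc : forall A B C D (h : hom C D) (g : hom B C) (f : hom A B),
      comp A C D h (comp A B C g f) = comp A B D (comp B C D h g) f
}.
Arguments hom {c} A B.
Arguments idm {c} A.
Arguments comp {c A B C} g f.
Notation "g ∘ f" := (comp g f) (at level 40, left associativity).

Definition is_iso {C : Cat} {A B : C} (f : hom A B) : Prop :=
  exists g : hom B A, g ∘ f = idm A /\ f ∘ g = idm B.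

Record SkewMonData (C : Cat) := {
  tens : C -> C -> C;
  tensm : forall X X' Y Y' : C, hom X X' -> hom Y Y' -> hom (tens X Y) (tens X' Y');
  unit : C;
  sa : forall X Y Z : C, hom (tens (tens X Y) Z) (tens X (tens Y Z));
  sl : forall X : C, hom (tens unit X) X;
  sr : forall X : C, hom X (tens X unit)
}.
Arguments tens {C} _ X Y.
Arguments tensm {C} _ {X X' Y Y'} f g.
Arguments unit {C} _.
Arguments sa {C} _ X Y Z.
Arguments sl {C} _ X.
Arguments sr {C} _ X.

Record SkewMonLaws (C : Cat) (d : SkewMonData C) : Prop := {
  tensm_id : forall X Y : C, tensm d (idm X) (idm Y) = idm (tens d X Y);
  tensm_comp : forall (X X' X'' Y Y' Y'' : C) (f : hom X X') (f' : hom X' X'')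
                      (g : hom Y Y') (g' : hom Y' Y''),
      tensm d (f' ∘ f) (g' ∘ g) = tensm d f' g' ∘ tensm d f g;
  sa_nat : forall (X X' Y Y' Z Z' : C) (f : hom X X') (g : hom Y Y') (h : hom Z Z'),
      tensm d f (tensm d g h) ∘ sa d X Y Z = sa d X' Y' Z' ∘ tensm d (tensm d f g) h;
  sl_nat : forall (X X' : C) (f : hom X X'),
      f ∘ sl d X = sl d X' ∘ tensm d (idm (unit d)) f;
  sr_nat : forall (X X' : C) (f : hom X X'),
      tensm d f (idm (unit d)) ∘ sr d X = sr d X' ∘ f;
  sm_pentagon : forall W X Y Z : C,
      tensm d (idm W) (sa d X Y Z) ∘ sa d W (tens d X Y) Z ∘ tensm d (sa d W X Y) (idm Z)
      = sa d W X (tens d Y Z) ∘ sa d (tens d W X) Y Z;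
  sm_lax1 : forall X Y : C,
      sl d (tens d X Y) ∘ sa d (unit d) X Y = tensm d (sl d X) (idm Y);
  sm_lax2 : forall X Y : C,
      tensm d (idm X) (sl d Y) ∘ sa d X (unit d) Y ∘ tensm d (sr d X) (idm Y)
      = idm (tens d X Y);
  sm_lax3 : forall X Y : C,
      sa d X Y (unit d) ∘ sr d (tens d X Y) = tensm d (idm X) (sr d Y);
  sm_lax4 : sl d (unit d) ∘ sr d (unit d) = idm (unit d)
}.

Record SkewMonCat := {
  smcat :> Cat;
  smdata :> SkewMonData smcat;
  smlaws : SkewMonLaws smcat smdata
}.

Definition is_monoidal (V : SkewMonCat) : Prop :=
  (forall X Y Z : V, is_iso (sa V X Y Z)) /\
  (forall X : V, is_iso (sl V X)) /\ (forall X : V, is_iso (sr V X)).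

(* A right adjoint [Y,-] to each (- ⊗ Y), presented by counits with the
   couniversal property (equivalent to a right adjoint). *)
Record ClosedStr (V : SkewMonCat) := {
  ihom : V -> V -> V;
  ev : forall Y W : V, hom (tens V (ihom Y W) Y) W;
  ev_univ : forall (Y W Z : V) (f : hom (tens V Z Y) W),
      exists g : hom Z (ihom Y W),
        ev Y W ∘ tensm V g (idm Y) = f /\
        forall g' : hom Z (ihom Y W), ev Y W ∘ tensm V g' (idm Y) = f -> g' = g
}.
Arguments ihom {V} _ Y W.
Arguments ev {V} _ Y W.

Record ActData (V : SkewMonCat) (A : Cat) := {
  act : V -> A -> A;
  actm : forall (X X' : V) (B B' : A), hom X X' -> hom B B' -> hom (act X B) (act X' B')
}.
Arguments act {V A} _ X B.
Arguments actm {V A} _ {X X' B B'} f g.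

Record ActFunLaws (V : SkewMonCat) (A : Cat) (a : ActData V A) : Prop := {
  actm_id : forall (X : V) (B : A), actm a (idm X) (idm B) = idm (act a X B);
  actm_comp : forall (X X' X'' : V) (B B' B'' : A) (f : hom X X') (f' : hom X' X'')
                     (g : hom B B') (g' : hom B' B''),
      actm a (f' ∘ f) (g' ∘ g) = actm a f' g' ∘ actm a f g
}.

Record ActFun (V : SkewMonCat) (A : Cat) := {
  actdata :> ActData V A;
  actlaws : ActFunLaws V A actdata
}.

Record HomData (V : SkewMonCat) (A : Cat) := {
  ehom : A -> A -> V;
  ehomm : forall A0 A' B B' : A, hom A' A0 -> hom B B' -> hom (ehom A0 B) (ehom A' B')
}.
Arguments ehom {V A} _ A0 B.
Arguments ehomm {V A} _ {A0 A' B B'} a b.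

Record HomFunLaws (V : SkewMonCat) (A : Cat) (h : HomData V A) : Prop := {
  ehomm_id : forall A0 B : A, ehomm h (idm A0) (idm B) = idm (ehom h A0 B);
  ehomm_comp : forall (A0 A' A'' B B' B'' : A) (a : hom A' A0) (a' : hom A'' A')
                      (b : hom B B') (b' : hom B' B''),
      ehomm h (a ∘ a') (b' ∘ b) = ehomm h a' b' ∘ ehomm h a b
}.

Record HomFun (V : SkewMonCat) (A : Cat) := {
  homdata :> HomData V A;
  homlaws : HomFunLaws V A homdata
}.

Record NatHomIso (V : SkewMonCat) (A : Cat) (ac : ActFun V A) (H : HomFun V A) := {
  phi : forall (X : V) (A0 B : A), hom (act ac X A0) B -> hom X (ehom H A0 B);
  phi_inv : forall (X : V) (A0 B : A), hom X (ehom H A0 B) -> hom (act ac X A0) B;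
  phi_inv_phi : forall X A0 B f, phi_inv X A0 B (phi X A0 B f) = f;
  phi_phi_inv : forall X A0 B g, phi X A0 B (phi_inv X A0 B g) = g;
  phi_natX : forall (X X' : V) (A0 B : A) (x : hom X' X) (f : hom (act ac X A0) B),
      phi X' A0 B (f ∘ actm ac x (idm A0)) = phi X A0 B f ∘ x;
  phi_natA : forall (X : V) (A0 A' B : A) (a : hom A' A0) (f : hom (act ac X A0) B),
      phi X A' B (f ∘ actm ac (idm X) a) = ehomm H a (idm B) ∘ phi X A0 B f;
  phi_natB : forall (X : V) (A0 B B' : A) (b : hom B B') (f : hom (act ac X A0) B),
      phi X A0 B' (b ∘ f) = ehomm H (idm A0) b ∘ phi X A0 B f
}.
Arguments NatHomIso {V A} ac H.
Arguments phi {V A ac H} _ X A0 B f.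

Record SkewActData (V : SkewMonCat) (A : Cat) (ac : ActFun V A) := {
  aa : forall (X Y : V) (B : A), hom (act ac (tens V X Y) B) (act ac X (act ac Y B));
  al : forall B : A, hom (act ac (unit V) B) B
}.
Arguments SkewActData {V A} ac.
Arguments aa {V A ac} _ X Y B.
Arguments al {V A ac} _ B.

Record SkewActLaws (V : SkewMonCat) (A : Cat) (ac : ActFun V A) (s : SkewActData ac)
  : Prop := {
  aa_nat : forall (X X' Y Y' : V) (B B' : A) (x : hom X X') (y : hom Y Y') (b : hom B B'),
      actm ac x (actm ac y b) ∘ aa s X Y B = aa s X' Y' B' ∘ actm ac (tensm V x y) b;
  al_nat : forall (B B' : A) (b : hom B B'),
      b ∘ al s B = al s B' ∘ actm ac (idm (unit V)) b;
  act_pentagon : forall (X Y Z : V) (B : A),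
      actm ac (idm X) (aa s Y Z B) ∘ aa s X (tens V Y Z) B ∘ actm ac (sa V X Y Z) (idm B)
      = aa s X Y (act ac Z B) ∘ aa s (tens V X Y) Z B;
  act_lax1 : forall (X : V) (B : A),
      al s (act ac X B) ∘ aa s (unit V) X B = actm ac (sl V X) (idm B);
  act_lax2 : forall (X : V) (B : A),
      actm ac (idm X) (al s B) ∘ aa s X (unit V) B ∘ actm ac (sr V X) (idm B)
      = idm (act ac X B)
}.

Record SkewActegory (V : SkewMonCat) (A : Cat) (ac : ActFun V A) := {
  sadata :> SkewActData ac;
  salaws : SkewActLaws V A ac sadata
}.
Arguments SkewActegory {V A} ac.

Definition is_actegory {V : SkewMonCat} {A : Cat} {ac : ActFun V A}
  (s : SkewActegory ac) : Prop :=
  (forall (X Y : V) (B : A), is_iso (aa s X Y B)) /\ (forall B : A, is_iso (al s B)).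

Record SkewVCatData (V : SkewMonCat) (A : Cat) (H : HomFun V A) := {
  vM : forall B C D : A, hom (tens V (ehom H C D) (ehom H B C)) (ehom H B D);
  vj : forall B : A, hom (unit V) (ehom H B B)
}.
Arguments SkewVCatData {V A} H.
Arguments vM {V A H} _ B C D.
Arguments vj {V A H} _ B.

Record SkewVCatLaws (V : SkewMonCat) (A : Cat) (H : HomFun V A) (s : SkewVCatData H)
  : Prop := {
  vM_nat : forall (B B' C D D' : A) (b : hom B' B) (d : hom D D'),
      ehomm H b d ∘ vM s B C D
      = vM s B' C D' ∘ tensm V (ehomm H (idm C) d) (ehomm H b (idm C));
  vM_dinat : forall (B C C' D : A) (c : hom C C'),
      vM s B C D ∘ tensm V (ehomm H c (idm D)) (idm (ehom H B C))
      = vM s B C' D ∘ tensm V (idm (ehom H C' D)) (ehomm H (idm B) c);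
  vj_dinat : forall (B B' : A) (b : hom B' B),
      ehomm H b (idm B) ∘ vj s B = ehomm H (idm B') b ∘ vj s B';
  vassoc : forall B C D E : A,
      vM s B D E ∘ tensm V (idm (ehom H D E)) (vM s B C D)
        ∘ sa V (ehom H D E) (ehom H C D) (ehom H B C)
      = vM s B C E ∘ tensm V (vM s C D E) (idm (ehom H B C));
  vunit_l : forall B C : A,
      vM s B C C ∘ tensm V (vj s C) (idm (ehom H B C)) = sl V (ehom H B C);
  vunit_r : forall B C : A,
      vM s B B C ∘ tensm V (idm (ehom H B C)) (vj s B) ∘ sr V (ehom H B C)
      = idm (ehom H B C)
}.

Record SkewVCat (V : SkewMonCat) (A : Cat) (H : HomFun V A) := {
  svdata :> SkewVCatData H;
  svlaws : SkewVCatLaws V A H svdata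
}.
Arguments SkewVCat {V A} H.

Definition bijective {X Y : Type} (f : X -> Y) : Prop :=
  (forall x x', f x = f x' -> x = x') /\ (forall y, exists x, f x = y).

Definition is_normal {V : SkewMonCat} {A : Cat} {H : HomFun V A}
  (s : SkewVCat H) : Prop :=
  forall B C : A, bijective (fun f : hom B C => ehomm H (idm B) f ∘ vj s B).

Definition eta_unit {V : SkewMonCat} {A : Cat} {ac : ActFun V A} {H : HomFun V A}
  (n : NatHomIso ac H) (Y : V) (B : A) : hom Y (ehom H B (act ac Y B)) :=
  phi n Y B (act ac Y B) (idm (act ac Y B)).

Definition is_tensored {V : SkewMonCat} {A : Cat} {ac : ActFun V A} {H : HomFun V A}
  (n : NatHomIso ac H) (cl : ClosedStr V) (s : SkewVCat H) : Prop :=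
  is_normal s /\
  forall (Y : V) (B C : A) (k : hom (ehom H (act ac Y B) C) (ihom cl Y (ehom H B C))),
    ev cl Y (ehom H B C) ∘ tensm V k (idm Y)
      = vM s B (act ac Y B) C ∘ tensm V (idm (ehom H (act ac Y B) C)) (eta_unit n Y B) ->
    is_iso k.

From Stdlib Require Import FunctionalExtensionality ProofIrrelevance.

(* The adjunction φ : A(X * B, C) ≅ V(X, A(B, C)) turns an actegory associator
   a : (X ⊗ Y) * B -> X * (Y * B) into a composition M = φ(ev ∘ (1 * ev) ∘ a), with
   ev : A(B, C) * B -> C the counit, and a unitor l into j = φ l; conversely
   a = φ⁻¹(M ∘ (η ⊗ η)) and l = φ⁻¹ j.  Both translations are governed by the single
   relation M ∘ (u ⊗ v) = φ(φ⁻¹ u ∘ (1 * φ⁻¹ v) ∘ a), through which each actegory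
   axiom is the transpose of the corresponding V-category axiom.  For the
   invertibility conditions, precomposition with l is transported by φ to the map
   f |-> A(B, f) ∘ j whose bijectivity is normality, and the transpose of k ∘ v is
   φ(φ⁻¹ v ∘ a), so by Yoneda all the k are invertible exactly when all the a are. *)

Lemma id_comp {C : Cat} {a b : C} (f : hom a b) : idm b ∘ f = f.
Proof. apply comp_id_l. Qed.
Lemma comp_id {C : Cat} {a b : C} (f : hom a b) : f ∘ idm a = f.
Proof. apply comp_id_r. Qed.
Lemma compA {C : Cat} {a b c d : C} (h : hom c d) (g : hom b c) (f : hom a b) :
  h ∘ (g ∘ f) = h ∘ g ∘ f.
Proof. apply comp_assoc. Qed.

Lemma compA_eq2 {C : Cat} {a b c z : C} {p : hom b c} {q : hom a b} {r : hom a c}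
  (E : p ∘ q = r) (h : hom c z) : h ∘ p ∘ q = h ∘ r.
Proof. rewrite <- compA, E. reflexivity. Qed.
Lemma compA_eq3 {C : Cat} {a b c d z : C} {p : hom c d} {q : hom b c} {r : hom a b}
  {s : hom a d} (E : p ∘ q ∘ r = s) (h : hom d z) : h ∘ p ∘ q ∘ r = h ∘ s.
Proof. rewrite <- E, !compA. reflexivity. Qed.

(* Composites are kept left-associated; [rw E] also rewrites a 2- or 3-fold
   composite that occurs behind a prefix [h ∘ _]. *)
Ltac lassoc := repeat rewrite compA.
Ltac rw_ E := first [rewrite E | rewrite (compA_eq2 E) | rewrite (compA_eq3 E)]; lassoc.
Tactic Notation "rw" open_constr(E) := rw_ E.

Lemma bijective_id {X : Type} : bijective (fun x : X => x).
Proof. split; [auto | intro x; exists x; reflexivity]. Qed.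

Lemma bijective_comp {X Y Z : Type} (f : X -> Y) (g : Y -> Z) :
  bijective f -> bijective g -> bijective (fun x => g (f x)).
Proof.
  intros [If Sf] [Ig Sg]. split.
  - intros x x' E. apply If, Ig, E.
  - intro z. destruct (Sg z) as [y <-]. destruct (Sf y) as [x <-]. exists x. reflexivity.
Qed.

Lemma bijective_cancel_l {X Y Z : Type} (f : X -> Y) (g : Y -> Z) :
  bijective g -> bijective (fun x => g (f x)) -> bijective f.
Proof.
  intros [Ig _] [Igf Sgf]. split.
  - intros x x' E. apply Igf. rewrite E. reflexivity.
  - intro y. destruct (Sgf (g y)) as [x Ex]. exists x. apply Ig, Ex.
Qed.

Lemma bijective_cancel_r {X Y Z : Type} (f : X -> Y) (g : Y -> Z) :
  bijective f -> bijective (fun x => g (f x)) -> bijective g.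
Proof.
  intros [_ Sf] [Igf Sgf]. split.
  - intros y y' E. destruct (Sf y) as [x <-], (Sf y') as [x' <-].
    rewrite (Igf x x' E). reflexivity.
  - intro z. destruct (Sgf z) as [x Ex]. exists (f x). exact Ex.
Qed.

Lemma bijective_ext {X Y : Type} (f g : X -> Y) :
  (forall x, f x = g x) -> bijective f -> bijective g.
Proof.
  intros E [If Sf]. split.
  - intros x x' Exx. apply If. rewrite !E. exact Exx.
  - intro y. destruct (Sf y) as [x Ex]. exists x. rewrite <- E. exact Ex.
Qed.

Lemma bijective_square {W X Y Z Z' : Type} (g : W -> Z) (f : X -> Y)
  (p : W -> X) (q : Y -> Z') (r : Z -> Z') :
  bijective p -> bijective q -> bijective r -> (forall w, r (g w) = q (f (p w))) ->
  bijective g <-> bijective f.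
Proof.
  intros Bp Bq Br E. split; intro B.
  - apply (bijective_cancel_r p); [exact Bp|].
    apply (bijective_cancel_l _ q); [exact Bq|].
    apply (bijective_ext (fun w => r (g w))); [exact E|].
    apply bijective_comp; assumption.
  - apply (bijective_cancel_l _ r); [exact Br|].
    apply (bijective_ext (fun w => q (f (p w)))); [intro w; symmetry; apply E|].
    apply bijective_comp; [apply bijective_comp|]; assumption.
Qed.

Lemma iso_iff_precomp_bijective {C : Cat} {a b : C} (p : hom a b) :
  is_iso p <-> forall c : C, bijective (fun f : hom b c => f ∘ p).
Proof.
  split.
  - intros [q [Hqp Hpq]] c. split.
    + intros f f' E. rewrite <- (comp_id f), <- (comp_id f'), <- Hpq, !compA, E.
      reflexivity.
    + intro g. exists (g ∘ q). rewrite <- compA, Hqp, comp_id. reflexivity.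
  - intro Hb. destruct (proj2 (Hb a) (idm a)) as [q Hq]. exists q. split; [exact Hq|].
    apply (proj1 (Hb b)). rewrite <- compA, Hq, comp_id, id_comp. reflexivity.
Qed.

Lemma iso_iff_postcomp_bijective {C : Cat} {a b : C} (k : hom a b) :
  is_iso k <-> forall z : C, bijective (fun v : hom z a => k ∘ v).
Proof.
  split.
  - intros [q [Hqk Hkq]] z. split.
    + intros v v' E. rewrite <- (id_comp v), <- (id_comp v'), <- Hqk, <- !compA, E.
      reflexivity.
    + intro g. exists (q ∘ g). rewrite compA, Hkq, id_comp. reflexivity.
  - intro Hb. destruct (proj2 (Hb b) (idm b)) as [q Hq]. exists q. split; [|exact Hq].
    apply (proj1 (Hb a)). rewrite compA, Hq, comp_id, id_comp. reflexivity.
Qed.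

Lemma ev_transpose_bijective {V : SkewMonCat} (cl : ClosedStr V) (Y W Z : V) :
  bijective (fun g : hom Z (ihom cl Y W) => ev cl Y W ∘ tensm V g (idm Y)).
Proof.
  split.
  - intros g g' E.
    destruct (ev_univ V cl Y W Z (ev cl Y W ∘ tensm V g (idm Y))) as [h [_ Hu]].
    rewrite (Hu g eq_refl), (Hu g' (eq_sym E)). reflexivity.
  - intro f. destruct (ev_univ V cl Y W Z f) as [g [Hg _]]. exists g. exact Hg.
Qed.

Section Correspondence.
Context {V : SkewMonCat} {A : Cat} {ac : ActFun V A} {H : HomFun V A}
  (n : NatHomIso ac H).

Local Notation "'φ' f" := (phi n _ _ _ f) (at level 10, f at level 9).
Local Notation "'φ⁻¹' g" := (phi_inv _ _ _ _ n _ _ _ g) (at level 10, g at level 9).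
Local Notation η := (eta_unit n).

Lemma tensm_id1 (X Y : V) : tensm V (idm X) (idm Y) = idm (tens V X Y).
Proof. apply (tensm_id _ _ (smlaws V)). Qed.
Lemma tensmM {X X' X'' Y Y' Y'' : V} (f : hom X X') (f' : hom X' X'') (g : hom Y Y')
  (g' : hom Y' Y'') : tensm V (f' ∘ f) (g' ∘ g) = tensm V f' g' ∘ tensm V f g.
Proof. apply (tensm_comp _ _ (smlaws V)). Qed.
Lemma actm_id1 (X : V) (B : A) : actm ac (idm X) (idm B) = idm (act ac X B).
Proof. apply (actm_id _ _ _ (actlaws _ _ ac)). Qed.
Lemma actmM {X X' X'' : V} {B B' B'' : A} (f : hom X X') (f' : hom X' X'')
  (g : hom B B') (g' : hom B' B'') :
  actm ac (f' ∘ f) (g' ∘ g) = actm ac f' g' ∘ actm ac f g.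
Proof. apply (actm_comp _ _ _ (actlaws _ _ ac)). Qed.
Lemma ehomm_id1 (B C : A) : ehomm H (idm B) (idm C) = idm (ehom H B C).
Proof. apply (ehomm_id _ _ _ (homlaws _ _ H)). Qed.
Lemma ehommM {B B' B'' C C' C'' : A} (a : hom B' B) (a' : hom B'' B') (b : hom C C')
  (b' : hom C' C'') : ehomm H (a ∘ a') (b' ∘ b) = ehomm H a' b' ∘ ehomm H a b.
Proof. apply (ehomm_comp _ _ _ (homlaws _ _ H)). Qed.

Lemma tensm_split_l {X X' Y Y' : V} (f : hom X X') (g : hom Y Y') :
  tensm V f g = tensm V f (idm Y') ∘ tensm V (idm X) g.
Proof. rewrite <- tensmM, id_comp, comp_id. reflexivity. Qed.
Lemma tensm_split_r {X X' Y Y' : V} (f : hom X X') (g : hom Y Y') :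
  tensm V f g = tensm V (idm X') g ∘ tensm V f (idm Y).
Proof. rewrite <- tensmM, id_comp, comp_id. reflexivity. Qed.
Lemma tensm_compr {X X' Y Y' Y'' : V} (f : hom X X') (g : hom Y' Y'') (h : hom Y Y') :
  tensm V f (g ∘ h) = tensm V (idm X') g ∘ tensm V f h.
Proof. rewrite <- tensmM, id_comp. reflexivity. Qed.
Lemma tensm_compl {X X' X'' Y Y' : V} (g : hom X' X'') (h : hom X X') (f : hom Y Y') :
  tensm V (g ∘ h) f = tensm V g (idm Y') ∘ tensm V h f.
Proof. rewrite <- tensmM, id_comp. reflexivity. Qed.
Lemma actm_split {X X' : V} {B B' : A} (f : hom X X') (g : hom B B') :
  actm ac f g = actm ac f (idm B') ∘ actm ac (idm X) g.
Proof. rewrite <- actmM, id_comp, comp_id. reflexivity. Qed.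
Lemma actm_compr {X : V} {B B' B'' : A} (g : hom B B') (g' : hom B' B'') :
  actm ac (idm X) (g' ∘ g) = actm ac (idm X) g' ∘ actm ac (idm X) g.
Proof. rewrite <- actmM, id_comp. reflexivity. Qed.
Lemma ehomm_split {B B' C C' : A} (b : hom B' B) (c : hom C C') :
  ehomm H b c = ehomm H b (idm C') ∘ ehomm H (idm B) c.
Proof. rewrite <- ehommM, !id_comp. reflexivity. Qed.

Lemma phi_invK {X : V} {B C : A} (f : hom (act ac X B) C) : φ⁻¹ (φ f) = f.
Proof. apply phi_inv_phi. Qed.
Lemma phiK {X : V} {B C : A} (g : hom X (ehom H B C)) : φ (φ⁻¹ g) = g.
Proof. apply phi_phi_inv. Qed.
Lemma phi_inj {X : V} {B C : A} (f g : hom (act ac X B) C) : φ f = φ g -> f = g.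
Proof. intro E. rewrite <- (phi_invK f), E. apply phi_invK. Qed.

Lemma phi_bijective (X : V) (B C : A) :
  bijective (fun f : hom (act ac X B) C => φ f).
Proof. split; [exact phi_inj | intro g; exists (φ⁻¹ g); apply phiK]. Qed.
Lemma phi_inv_bijective (X : V) (B C : A) :
  bijective (fun g : hom X (ehom H B C) => φ⁻¹ g).
Proof.
  split.
  - intros g g' E. rewrite <- (phiK g), E. apply phiK.
  - intro f. exists (φ f). apply phi_invK.
Qed.

Lemma phi_nat_X {X X' : V} {B C : A} (x : hom X' X) (f : hom (act ac X B) C) :
  φ (f ∘ actm ac x (idm B)) = φ f ∘ x.
Proof. apply phi_natX. Qed.
Lemma phi_nat_A {X : V} {B B' C : A} (a : hom B' B) (f : hom (act ac X B) C) :
  φ (f ∘ actm ac (idm X) a) = ehomm H a (idm C) ∘ φ f.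
Proof. apply phi_natA. Qed.
Lemma phi_nat_B {X : V} {B C C' : A} (b : hom C C') (f : hom (act ac X B) C) :
  φ (b ∘ f) = ehomm H (idm B) b ∘ φ f.
Proof. apply phi_natB. Qed.
Lemma phi_inv_nat_X {X X' : V} {B C : A} (x : hom X' X) (u : hom X (ehom H B C)) :
  φ⁻¹ (u ∘ x) = φ⁻¹ u ∘ actm ac x (idm B).
Proof. apply phi_inj. rewrite phi_nat_X, !phiK. reflexivity. Qed.
Lemma phi_inv_nat_A {X : V} {B B' C : A} (a : hom B' B) (u : hom X (ehom H B C)) :
  φ⁻¹ (ehomm H a (idm C) ∘ u) = φ⁻¹ u ∘ actm ac (idm X) a.
Proof. apply phi_inj. rewrite phi_nat_A, !phiK. reflexivity. Qed.
Lemma phi_inv_nat_B {X : V} {B C C' : A} (b : hom C C') (u : hom X (ehom H B C)) :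
  φ⁻¹ (ehomm H (idm B) b ∘ u) = b ∘ φ⁻¹ u.
Proof. apply phi_inj. rewrite phi_nat_B, !phiK. reflexivity. Qed.

Definition counit (B C : A) : hom (act ac (ehom H B C) B) C := φ⁻¹ (idm (ehom H B C)).

Lemma phi_inv_counit {X : V} {B C : A} (u : hom X (ehom H B C)) :
  φ⁻¹ u = counit B C ∘ actm ac u (idm B).
Proof. unfold counit. rewrite <- phi_inv_nat_X, id_comp. reflexivity. Qed.
Lemma phi_counit (B C : A) : φ (counit B C) = idm _.
Proof. apply phiK. Qed.
Lemma phi_inv_eta (Y : V) (B : A) : φ⁻¹ (η Y B) = idm _.
Proof. apply phi_invK. Qed.
Lemma phi_eta {X : V} {B C : A} (f : hom (act ac X B) C) :
  φ f = ehomm H (idm B) f ∘ η X B.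
Proof. unfold eta_unit. rewrite <- phi_nat_B, comp_id. reflexivity. Qed.
Lemma phi_actm_eta {X X' : V} {B : A} (x : hom X X') :
  φ (actm ac x (idm B)) = η X' B ∘ x.
Proof. unfold eta_unit. rewrite <- phi_nat_X, id_comp. reflexivity. Qed.
Lemma phi_inv_ehomm_r {B C C' : A} (c : hom C C') :
  φ⁻¹ (ehomm H (idm B) c) = c ∘ counit B C.
Proof. rewrite <- (comp_id (ehomm H (idm B) c)), phi_inv_nat_B. reflexivity. Qed.
Lemma phi_inv_ehomm_l {B B' C : A} (b : hom B' B) :
  φ⁻¹ (ehomm H b (idm C)) = counit B C ∘ actm ac (idm _) b.
Proof. rewrite <- (comp_id (ehomm H b (idm C))), phi_inv_nat_A. reflexivity. Qed.

Definition vcat_data_of_act (s : SkewActData ac) : SkewVCatData H :=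
  {| vM := fun B C D => φ (counit C D ∘ actm ac (idm _) (counit B C) ∘ aa s _ _ B);
     vj := fun B => φ (al s B) |}.

Definition act_data_of_vcat (t : SkewVCatData H) : SkewActData ac :=
  {| aa := fun X Y B => φ⁻¹ (vM t B _ _ ∘ tensm V (η X _) (η Y B));
     al := fun B => φ⁻¹ (vj t B) |}.

Record corresponds (s : SkewActData ac) (t : SkewVCatData H) : Prop := {
  vM_tensm : forall (X Y : V) (B C D : A) (u : hom X (ehom H C D)) (v : hom Y (ehom H B C)),
    vM t B C D ∘ tensm V u v = φ (φ⁻¹ u ∘ actm ac (idm X) (φ⁻¹ v) ∘ aa s X Y B);
  vj_al : forall B : A, vj t B = φ (al s B)
}.

Lemma vcat_data_of_act_corresponds (s : SkewActData ac) :
  SkewActLaws V A ac s -> corresponds s (vcat_data_of_act s).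
Proof.
  intro LA. split; [|reflexivity]. intros. cbn [vM vcat_data_of_act].
  rewrite <- phi_nat_X. f_equal.
  rewrite <- (compA _ (aa s _ _ B)), <- (aa_nat _ _ _ _ LA). lassoc.
  rewrite <- (compA _ (actm ac (idm _) (counit _ _))), <- actmM, id_comp,
    <- phi_inv_counit, (actm_split u (φ⁻¹ v)).
  lassoc. rewrite <- phi_inv_counit. reflexivity.
Qed.

Lemma act_data_of_vcat_corresponds (t : SkewVCatData H) :
  SkewVCatLaws V A H t -> corresponds (act_data_of_vcat t) t.
Proof.
  intro LV. split; [|intro B; symmetry; apply phiK]. intros. cbn [aa act_data_of_vcat].
  symmetry.
  rewrite phi_nat_B, phiK, compA, (vM_nat _ _ _ _ LV), ehomm_id1, <- compA, <- tensmM,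
    id_comp, <- phi_eta.
  rewrite phi_nat_A, phiK, tensm_compl, compA, (vM_dinat _ _ _ _ LV), <- compA, <- tensmM,
    id_comp, <- phi_eta, phiK.
  reflexivity.
Qed.

Section Transfer.
Variables (s : SkewActData ac) (t : SkewVCatData H).
Hypothesis st : corresponds s t.

Lemma phi_comp_aa {X Y : V} {B C D : A} (f : hom (act ac X C) D) (g : hom (act ac Y B) C) :
  φ (f ∘ actm ac (idm X) g ∘ aa s X Y B) = vM t B C D ∘ tensm V (φ f) (φ g).
Proof. rewrite (vM_tensm _ _ st), !phi_invK. reflexivity. Qed.
Lemma phi_actm_aa {X Y : V} {B C : A} (g : hom (act ac Y B) C) :
  φ (actm ac (idm X) g ∘ aa s X Y B) = vM t B C _ ∘ tensm V (η X C) (φ g).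
Proof. unfold eta_unit. rewrite <- phi_comp_aa, id_comp. reflexivity. Qed.
Lemma phi_postcomp_aa {X Y : V} {B D : A} (f : hom (act ac X (act ac Y B)) D) :
  φ (f ∘ aa s X Y B) = vM t B _ D ∘ tensm V (φ f) (η Y B).
Proof. unfold eta_unit. rewrite <- phi_comp_aa, actm_id1, comp_id. reflexivity. Qed.
Lemma phi_aa (X Y : V) (B : A) :
  φ (aa s X Y B) = vM t B _ _ ∘ tensm V (η X _) (η Y B).
Proof. rewrite <- (id_comp (aa s X Y B)), phi_postcomp_aa. reflexivity. Qed.
Lemma vM_counit (B C D : A) :
  vM t B C D = φ (counit C D ∘ actm ac (idm _) (counit B C) ∘ aa s _ _ B).
Proof. rewrite <- (comp_id (vM t B C D)), <- tensm_id1, (vM_tensm _ _ st). reflexivity. Qed.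
Lemma vM_eta_unit (Y : V) (B C : A) :
  vM t B (act ac Y B) C ∘ tensm V (idm _) (η Y B) = φ (counit _ _ ∘ aa s _ Y B).
Proof.
  rewrite (vM_tensm _ _ st), phi_inv_eta. fold (counit (act ac Y B) C).
  rewrite actm_id1, comp_id. reflexivity.
Qed.

Lemma vcat_laws_of_act_laws : SkewActLaws V A ac s -> SkewVCatLaws V A H t.
Proof.
  intro LA.
  assert (aa_natB : forall (X Y : V) (B B' : A) (b : hom B B'),
    aa s X Y B' ∘ actm ac (idm _) b = actm ac (idm X) (actm ac (idm Y) b) ∘ aa s X Y B).
  { intros. rewrite (aa_nat _ _ _ _ LA), tensm_id1. reflexivity. }
  constructor.
  - intros. rewrite (vM_tensm _ _ st), phi_inv_ehomm_r, phi_inv_ehomm_l, vM_counit,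
      ehomm_split, <- compA, <- phi_nat_B, <- phi_nat_A.
    f_equal. lassoc. rewrite actm_compr. lassoc. rw (aa_natB _ _ _ _ _). reflexivity.
  - intros. rewrite !(vM_tensm _ _ st), phi_inv_ehomm_r, phi_inv_ehomm_l.
    fold (counit B C) (counit C' D). f_equal. lassoc. rewrite actm_compr. lassoc.
    reflexivity.
  - intros. rewrite !(vj_al _ _ st), <- phi_nat_A, <- phi_nat_B. f_equal.
    symmetry. apply (al_nat _ _ _ _ LA).
  - intros. rewrite !(vM_tensm _ _ st), !vM_counit, !phi_invK, <- phi_nat_X.
    fold (counit B C) (counit C D) (counit B D) (counit D E). f_equal.
    rewrite !actm_compr. lassoc. rw (act_pentagon _ _ _ _ LA _ _ _ _).
    rw (eq_sym (aa_natB _ _ _ _ _)). reflexivity.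
  - intros. rewrite (vM_tensm _ _ st), (vj_al _ _ st), phi_invK.
    fold (counit B C). rewrite <- (al_nat _ _ _ _ LA). lassoc.
    rw (act_lax1 _ _ _ _ LA _ _). rewrite phi_nat_X, phi_counit, id_comp. reflexivity.
  - intros. rewrite (vM_tensm _ _ st), (vj_al _ _ st), phi_invK, <- phi_nat_X.
    fold (counit B C). lassoc. rw (act_lax2 _ _ _ _ LA _ _).
    rewrite comp_id, phi_counit. reflexivity.
Qed.

Lemma act_laws_of_vcat_laws : SkewVCatLaws V A H t -> SkewActLaws V A ac s.
Proof.
  intro LV. constructor.
  - intros X X' Y Y' B B' x y b. apply phi_inj.
    rewrite (actm_split x (actm ac y b)), phi_comp_aa, phi_actm_eta, (actm_split y b),
      phi_nat_A, phi_actm_eta.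
    rewrite (actm_split (tensm V x y) b), (compA (aa s X' Y' B')), phi_nat_A, phi_nat_X,
      phi_aa.
    lassoc. rewrite (vM_nat _ _ _ _ LV), ehomm_id1, <- !compA, <- !tensmM, id_comp.
    reflexivity.
  - intros B B' b. apply phi_inj. rewrite phi_nat_B, phi_nat_A, <- !(vj_al _ _ st).
    symmetry. apply (vj_dinat _ _ _ _ LV).
  - intros X Y Z B. apply phi_inj.
    rewrite phi_nat_X, phi_actm_aa, phi_aa, phi_postcomp_aa, phi_aa, tensm_compr,
      tensm_compl.
    lassoc. rw (sa_nat _ _ (smlaws V) _ _ _ _ _ _ _ _ _).
    rw (vassoc _ _ _ _ LV _ _ _ _). reflexivity.
  - intros X B. apply phi_inj.
    rewrite <- (comp_id (al s (act ac X B))), <- (actm_id1 (unit V) (act ac X B)),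
      phi_comp_aa, <- (vj_al _ _ st), phi_actm_eta, tensm_split_l.
    lassoc. rw (vunit_l _ _ _ _ LV _ _). rewrite <- (sl_nat _ _ (smlaws V)). reflexivity.
  - intros X B. apply phi_inj.
    rewrite phi_nat_X, phi_actm_aa, <- (vj_al _ _ st), tensm_split_r.
    lassoc. rw (sr_nat _ _ (smlaws V) _ _ _).
    rw (vunit_r _ _ _ _ LV _ _). rewrite id_comp. reflexivity.
Qed.

Lemma al_iso_iff_normal : (forall B, is_iso (al s B)) <->
  (forall B C : A, bijective (fun f : hom B C => ehomm H (idm B) f ∘ vj t B)).
Proof.
  assert (E : forall B C : A, bijective (fun f : hom B C => f ∘ al s B) <->
                bijective (fun f : hom B C => ehomm H (idm B) f ∘ vj t B)).
  { intros B C. apply iff_sym.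
    apply (bijective_square _ _ (fun f => f) (fun f => φ f) (fun g => g));
      [apply bijective_id | apply phi_bijective | apply bijective_id |].
    intro f. rewrite (vj_al _ _ st), phi_nat_B. reflexivity. }
  split; intros Hi B.
  - intro C. apply E. apply iso_iff_precomp_bijective. apply Hi.
  - apply iso_iff_precomp_bijective. intro C. apply E. apply Hi.
Qed.

Lemma ev_tensm_comp (LA : SkewActLaws V A ac s) (cl : ClosedStr V) (Y : V) (B C : A)
  (k : hom (ehom H (act ac Y B) C) (ihom cl Y (ehom H B C)))
  (Hk : ev cl Y (ehom H B C) ∘ tensm V k (idm Y) = φ (counit _ _ ∘ aa s _ Y B))
  (X : V) (v : hom X (ehom H (act ac Y B) C)) :
  ev cl Y (ehom H B C) ∘ tensm V (k ∘ v) (idm Y) = φ (φ⁻¹ v ∘ aa s X Y B).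
Proof.
  rewrite tensm_compl, compA, Hk, <- phi_nat_X, <- compA, <- (aa_nat _ _ _ _ LA),
    actm_id1, compA, <- phi_inv_counit.
  reflexivity.
Qed.

Lemma aa_iso_iff_tensored (LA : SkewActLaws V A ac s) (cl : ClosedStr V) :
  (forall (X Y : V) (B : A), is_iso (aa s X Y B)) <->
  (forall (Y : V) (B C : A) (k : hom (ehom H (act ac Y B) C) (ihom cl Y (ehom H B C))),
    ev cl Y (ehom H B C) ∘ tensm V k (idm Y)
      = vM t B (act ac Y B) C ∘ tensm V (idm (ehom H (act ac Y B) C)) (eta_unit n Y B) ->
    is_iso k).
Proof.
  assert (Sq : forall Y B C k,
    ev cl Y (ehom H B C) ∘ tensm V k (idm Y) = φ (counit _ _ ∘ aa s _ Y B) ->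
    forall X, bijective (fun v : hom X (ehom H (act ac Y B) C) => k ∘ v) <->
              bijective (fun f : hom (act ac X (act ac Y B)) C => f ∘ aa s X Y B)).
  { intros Y B C k Hk X.
    apply (bijective_square _ _ (fun v => φ⁻¹ v) (fun f => φ f)
             (fun g => ev cl Y (ehom H B C) ∘ tensm V g (idm Y)));
      [apply phi_inv_bijective | apply phi_bijective | apply ev_transpose_bijective |].
    intro v. apply (ev_tensm_comp LA cl Y B C k Hk). }
  split.
  - intros Hi Y B C k Hk. rewrite vM_eta_unit in Hk.
    apply iso_iff_postcomp_bijective. intro X. apply (Sq Y B C k Hk X).
    apply iso_iff_precomp_bijective, Hi.
  - intros Ht X Y B. apply iso_iff_precomp_bijective. intro C.
    destruct (proj2 (ev_transpose_bijective cl Y (ehom H B C) (ehom H (act ac Y B) C))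
                (φ (counit _ _ ∘ aa s _ Y B))) as [k Hk].
    apply (Sq Y B C k Hk X). apply iso_iff_postcomp_bijective. apply Ht.
    rewrite Hk, vM_eta_unit. reflexivity.
Qed.

End Transfer.

Definition vcat_of_actegory (s : SkewActegory ac) : SkewVCat H :=
  {| svdata := vcat_data_of_act s;
     svlaws := vcat_laws_of_act_laws s _ (vcat_data_of_act_corresponds s (salaws _ _ _ s))
                 (salaws _ _ _ s) |}.

Definition actegory_of_vcat (t : SkewVCat H) : SkewActegory ac :=
  {| sadata := act_data_of_vcat t;
     salaws := act_laws_of_vcat_laws _ t (act_data_of_vcat_corresponds t (svlaws _ _ _ t))
                 (svlaws _ _ _ t) |}.

End Correspondence.

Lemma skew_actegory_eq {V : SkewMonCat} {A : Cat} {ac : ActFun V A}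
  (s1 s2 : SkewActegory ac) :
  (forall X Y B, aa s1 X Y B = aa s2 X Y B) -> (forall B, al s1 B = al s2 B) -> s1 = s2.
Proof.
  destruct s1 as [[a1 l1] p1], s2 as [[a2 l2] p2]; simpl; intros Ea El.
  assert (a1 = a2) as <-.
  { do 3 (apply functional_extensionality_dep; intro). apply Ea. }
  assert (l1 = l2) as <-.
  { apply functional_extensionality_dep; intro. apply El. }
  f_equal. apply proof_irrelevance.
Qed.

Lemma skew_vcat_eq {V : SkewMonCat} {A : Cat} {H : HomFun V A} (t1 t2 : SkewVCat H) :
  (forall B C D, vM t1 B C D = vM t2 B C D) -> (forall B, vj t1 B = vj t2 B) -> t1 = t2.
Proof.
  destruct t1 as [[m1 j1] p1], t2 as [[m2 j2] p2]; simpl; intros Em Ej.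
  assert (m1 = m2) as <-.
  { do 3 (apply functional_extensionality_dep; intro). apply Em. }
  assert (j1 = j2) as <-.
  { apply functional_extensionality_dep; intro. apply Ej. }
  f_equal. apply proof_irrelevance.
Qed.

Section Bijection.
Context {V : SkewMonCat} {A : Cat} {ac : ActFun V A} {H : HomFun V A}
  (n : NatHomIso ac H).

Lemma vcat_of_actegoryK (s : SkewActegory ac) :
  actegory_of_vcat n (vcat_of_actegory n s) = s.
Proof.
  apply skew_actegory_eq; intros; simpl.
  - rewrite <- (phi_aa n s _ (vcat_data_of_act_corresponds n s (salaws _ _ _ s))).
    apply phi_invK.
  - apply phi_invK.
Qed.

Lemma actegory_of_vcatK (t : SkewVCat H) : vcat_of_actegory n (actegory_of_vcat n t) = t.
Proof.
  apply skew_vcat_eq; intros; simpl.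
  - symmetry. apply (vM_counit n _ t (act_data_of_vcat_corresponds n t (svlaws _ _ _ t))).
  - apply phiK.
Qed.

Lemma vcat_of_actegory_tensored (cl : ClosedStr V) (s : SkewActegory ac) :
  is_actegory s -> is_tensored n cl (vcat_of_actegory n s).
Proof.
  pose proof (vcat_data_of_act_corresponds n s (salaws _ _ _ s)) as st.
  intros [Ha Hl]. split.
  - exact (proj1 (al_iso_iff_normal n s _ st) Hl).
  - exact (proj1 (aa_iso_iff_tensored n s _ st (salaws _ _ _ s) cl) Ha).
Qed.

Lemma actegory_of_vcat_actegory (cl : ClosedStr V) (t : SkewVCat H) :
  is_tensored n cl t -> is_actegory (actegory_of_vcat n t).
Proof.
  pose proof (act_data_of_vcat_corresponds n t (svlaws _ _ _ t)) as st.
  intros [Hn Ht]. split.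
  - exact (proj2 (aa_iso_iff_tensored n _ t st (salaws _ _ _ (actegory_of_vcat n t)) cl)
             Ht).
  - exact (proj2 (al_iso_iff_normal n _ t st) Hn).
Qed.

End Bijection.

Theorem mainTheorem6 (V : SkewMonCat) (A : Cat) (ac : ActFun V A) (H : HomFun V A)
  (n : NatHomIso ac H) :
  (exists (F : SkewActegory ac -> SkewVCat H) (G : SkewVCat H -> SkewActegory ac),
      (forall s, G (F s) = s) /\ (forall t, F (G t) = t)) /\
  (is_monoidal V -> forall cl : ClosedStr V,
    exists (F : {s : SkewActegory ac | is_actegory s} -> {t : SkewVCat H | is_tensored n cl t})
           (G : {t : SkewVCat H | is_tensored n cl t} -> {s : SkewActegory ac | is_actegory s}),
      (forall s, G (F s) = s) /\ (forall t, F (G t) = t)).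
Proof.
  split.
  - exists (vcat_of_actegory n), (actegory_of_vcat n).
    split; [apply vcat_of_actegoryK | apply actegory_of_vcatK].
  - intros _ cl.
    exists (fun p => exist _ _ (vcat_of_actegory_tensored n cl _ (proj2_sig p))).
    exists (fun p => exist _ _ (actegory_of_vcat_actegory n cl _ (proj2_sig p))).
    split; intros [x p]; apply eq_sig_hprop; try (intros; apply proof_irrelevance).
    + apply vcat_of_actegoryK.
    + apply actegory_of_vcatK.
Qed.
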